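(* (1) For every $\lambda$-term $M$, $(M^v)^\flat=M$. (2) For every $M\in\,!\Lambda^v$ and $U\in\,!\Lambda^v_{val}$ and variable $x$, $M\{U/x\}\in\,!\Lambda^v$ and $(M\{U/x\})^\flat=M^\flat\{U^\flat/x\}$. (3) For every $M\in\,!\Lambda^v$ and $T\in\,!\Lambda$, if $M\to_b T$ then $T\in\,!\Lambda^v$ and either $M^\flat=T^\flat$ or $M^\flat\to_{\beta_v}T^\flat$.
   Context: Bang calculus. The set $!\Lambda$ of terms is $T,S ::= x \mid \lambda x.T \mid T\,S \mid \mathrm{der}\,T \mid\ !T$; $\lambda$ the only binder, up to $\alpha$-conversion, $T\{S/x\}$ capture-avoiding substitution. Contexts: $C ::= [\cdot] \mid \lambda x.C \mid C\,T \mid T\,C \mid \mathrm{der}\,C \mid\ !C$. Root steps $(\lambda x.T)(!S)\mapsto_v T\{S/x\}$, $\mathrm{der}(!T)\mapsto_d T$; $\to_b$ is the closure of $\mapsto_v\cup\mapsto_d$ under contexts. $\lambda$-calculus: $M ::= V\mid MN$, values $V ::= x\mid\lambda x.M$; $\to_{\beta_v}$ is the closure of $(\lambda x.M)V\mapsto_{\beta_v}M\{V/x\}$ ($V$ a value) under $\lambda$-contexts $C ::= [\cdot]\mid\lambda x.C\mid C\,M\mid M\,C$. CbV translation: $x^v=\,!x$, $(\lambda x.M)^v=\,!(\lambda x.M^v)$, $(MN)^v=(\mathrm{der}\,M^v)\,N^v$. The subsets $!\Lambda^v$ and $!\Lambda^v_{val}$ of $!\Lambda$ are defined by mutual induction: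 $M,N ::=\ !U\mid(\mathrm{der}\,M)\,N\mid U\,M$ (elements of $!\Lambda^v$) and $U ::= x\mid\lambda x.M$ (elements of $!\Lambda^v_{val}$). The forgetful map $(\cdot)^\flat$ from $!\Lambda^v\cup\,!\Lambda^v_{val}$ to $\lambda$-terms: $(!U)^\flat=U^\flat$, $((\mathrm{der}\,M)N)^\flat=M^\flat N^\flat$, $(U\,M)^\flat=U^\flat M^\flat$, $x^\flat=x$, $(\lambda x.M)^\flat=\lambda x.M^\flat$. *)

(* Terms up to alpha-conversion are represented with
   de Bruijn indices; variables are natural numbers. *)
From Stdlib Require Import Arith.

Inductive bterm : Type :=
| BVar : nat -> bterm
| BLam : bterm -> bterm
| BApp : bterm -> bterm -> bterm
| BDer : bterm -> bterm
| BBang : bterm -> bterm.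

Inductive lterm : Type :=
| LVar : nat -> lterm
| LLam : lterm -> lterm
| LApp : lterm -> lterm -> lterm.

Definition upren (r : nat -> nat) : nat -> nat :=
  fun n => match n with 0 => 0 | S n => S (r n) end.

Fixpoint bren (r : nat -> nat) (t : bterm) : bterm :=
  match t with
  | BVar n => BVar (r n)
  | BLam t => BLam (bren (upren r) t)
  | BApp t s => BApp (bren r t) (bren r s)
  | BDer t => BDer (bren r t)
  | BBang t => BBang (bren r t)
  end.

Definition bup (s : nat -> bterm) : nat -> bterm :=
  fun n => match n with 0 => BVar 0 | S n => bren S (s n) end.

Fixpoint bsubst (s : nat -> bterm) (t : bterm) : bterm :=
  match t with
  | BVar n => s n
  | BLam t => BLam (bsubst (bup s) t)
  | BApp t u => BApp (bsubst s t) (bsubst s u)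
  | BDer t => BDer (bsubst s t)
  | BBang t => BBang (bsubst s t)
  end.

Fixpoint lren (r : nat -> nat) (t : lterm) : lterm :=
  match t with
  | LVar n => LVar (r n)
  | LLam t => LLam (lren (upren r) t)
  | LApp t s => LApp (lren r t) (lren r s)
  end.

Definition lup (s : nat -> lterm) : nat -> lterm :=
  fun n => match n with 0 => LVar 0 | S n => lren S (s n) end.

Fixpoint lsubst (s : nat -> lterm) (t : lterm) : lterm :=
  match t with
  | LVar n => s n
  | LLam t => LLam (lsubst (lup s) t)
  | LApp t u => LApp (lsubst s t) (lsubst s u)
  end.

(* T{S/x} for a free variable x: replace x by S, leave other variables alone *)
Definition bsubst1 (x : nat) (S : bterm) : nat -> bterm :=
  fun n => if Nat.eqb n x then S else BVar n.
Definition lsubst1 (x : nat) (S : lterm) : nat -> lterm :=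
  fun n => if Nat.eqb n x then S else LVar n.

(* beta-substitution: the body of a binder, bound variable (index 0)
   replaced by S, the other free variables shifted back down *)
Definition bscons (S0 : bterm) : nat -> bterm :=
  fun n => match n with 0 => S0 | Datatypes.S n => BVar n end.
Definition lscons (S0 : lterm) : nat -> lterm :=
  fun n => match n with 0 => S0 | Datatypes.S n => LVar n end.
Definition bbeta (T S : bterm) : bterm := bsubst (bscons S) T.
Definition lbeta (M V : lterm) : lterm := lsubst (lscons V) M.

Inductive broot : bterm -> bterm -> Prop :=
| broot_v T S : broot (BApp (BLam T) (BBang S)) (bbeta T S)
| broot_d T : broot (BDer (BBang T)) T.

Inductive bctx : Type :=
| BHole : bctx
| BCLam : bctx -> bctx
| BCAppL : bctx -> bterm -> bctx
| BCAppR : bterm -> bctx -> bctx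
| BCDer : bctx -> bctx
| BCBang : bctx -> bctx.

Fixpoint bplug (C : bctx) (t : bterm) : bterm :=
  match C with
  | BHole => t
  | BCLam C => BLam (bplug C t)
  | BCAppL C u => BApp (bplug C t) u
  | BCAppR u C => BApp u (bplug C t)
  | BCDer C => BDer (bplug C t)
  | BCBang C => BBang (bplug C t)
  end.

Definition bstep (T T' : bterm) : Prop :=
  exists C R R', broot R R' /\ T = bplug C R /\ T' = bplug C R'.

Definition is_value (M : lterm) : Prop :=
  match M with LVar _ => True | LLam _ => True | LApp _ _ => False end.

Inductive lroot : lterm -> lterm -> Prop :=
| lroot_bv M V : is_value V -> lroot (LApp (LLam M) V) (lbeta M V).

Inductive lctx : Type :=
| LHole : lctx
| LCLam : lctx -> lctx
| LCAppL : lctx -> lterm -> lctx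
| LCAppR : lterm -> lctx -> lctx.

Fixpoint lplug (C : lctx) (t : lterm) : lterm :=
  match C with
  | LHole => t
  | LCLam C => LLam (lplug C t)
  | LCAppL C u => LApp (lplug C t) u
  | LCAppR u C => LApp u (lplug C t)
  end.

Definition lstep (M M' : lterm) : Prop :=
  exists C R R', lroot R R' /\ M = lplug C R /\ M' = lplug C R'.

Fixpoint cbv (M : lterm) : bterm :=
  match M with
  | LVar x => BBang (BVar x)
  | LLam M => BBang (BLam (cbv M))
  | LApp M N => BApp (BDer (cbv M)) (cbv N)
  end.

Inductive in_bv : bterm -> Prop :=
| in_bv_bang U : in_bv_val U -> in_bv (BBang U)
| in_bv_der M N : in_bv M -> in_bv N -> in_bv (BApp (BDer M) N)
| in_bv_app U M : in_bv_val U -> in_bv M -> in_bv (BApp U M)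
with in_bv_val : bterm -> Prop :=
| in_bv_val_var x : in_bv_val (BVar x)
| in_bv_val_lam M : in_bv M -> in_bv_val (BLam M).

(* ---------- forgetful map; only meaningful on !Lambda^v u !Lambda^v_val
   (the BDer case and applications of other shapes are junk values) ---------- *)
Fixpoint flat (t : bterm) : lterm :=
  match t with
  | BVar x => LVar x
  | BLam M => LLam (flat M)
  | BBang U => flat U
  | BApp (BDer M) N => LApp (flat M) (flat N)
  | BApp U M => LApp (flat U) (flat M)
  | BDer M => flat M
  end.

(* The fragment !Lambda^v is closed under
   substitution of values, and substitution commutes with forgetting, because
   values of !Lambda^v_val are forgotten to lambda-values.  Hence a b-step
   inside !Lambda^v is either a derelict step der(!U) N -> U N, invisible after
   forgetting, or a v-step (lambda x.T)(!S) -> T{S/x}, whose image is a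
   beta_v-step since S is forgotten to a value. *)

Scheme in_bv_ind2 := Induction for in_bv Sort Prop
  with in_bv_val_ind2 := Induction for in_bv_val Sort Prop.
Combined Scheme in_bv_mut_ind from in_bv_ind2, in_bv_val_ind2.

Lemma flat_cbv (M : lterm) : flat (cbv M) = M.
Proof. induction M; simpl; f_equal; auto. Qed.

Lemma flat_app_val (U N : bterm) :
  in_bv_val U -> flat (BApp U N) = LApp (flat U) (flat N).
Proof. intros HU; destruct HU; reflexivity. Qed.

Lemma flat_value (U : bterm) : in_bv_val U -> is_value (flat U).
Proof. intros HU; destruct HU; exact I. Qed.

Lemma bren_in_bv :
  (forall M, in_bv M -> forall r, in_bv (bren r M)) /\
  (forall U, in_bv_val U -> forall r, in_bv_val (bren r U)).
Proof. apply in_bv_mut_ind; intros; simpl; constructor; auto. Qed.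

Lemma flat_bren (r : nat -> nat) (t : bterm) : flat (bren r t) = lren r (flat t).
Proof.
  revert r; induction t; intros r; simpl; try (f_equal; auto; fail).
  destruct t1; simpl in *; f_equal; auto.
Qed.

Lemma lsubst_ext (s s' : nat -> lterm) (t : lterm) :
  (forall n, s n = s' n) -> lsubst s t = lsubst s' t.
Proof.
  revert s s'; induction t; intros s s' Hs; simpl; f_equal; auto.
  apply IHt; intros [|n]; simpl; auto.
  rewrite Hs; reflexivity.
Qed.

Definition val_subst (s : nat -> bterm) : Prop := forall n, in_bv_val (s n).

Lemma val_subst_bup (s : nat -> bterm) : val_subst s -> val_subst (bup s).
Proof. intros Hs [|n]; simpl; [constructor | apply bren_in_bv, Hs]. Qed.

Lemma val_subst_bscons (U : bterm) : in_bv_val U -> val_subst (bscons U).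
Proof. intros HU [|n]; simpl; [exact HU | constructor]. Qed.

Lemma val_subst_bsubst1 (x : nat) (U : bterm) : in_bv_val U -> val_subst (bsubst1 x U).
Proof. intros HU n; unfold bsubst1; destruct (Nat.eqb n x); [exact HU | constructor]. Qed.

Lemma bsubst_bv :
  (forall M, in_bv M -> forall s, val_subst s ->
     in_bv (bsubst s M) /\ flat (bsubst s M) = lsubst (fun n => flat (s n)) (flat M)) /\
  (forall U, in_bv_val U -> forall s, val_subst s ->
     in_bv_val (bsubst s U) /\ flat (bsubst s U) = lsubst (fun n => flat (s n)) (flat U)).
Proof.
  apply in_bv_mut_ind.
  - intros U _ IHU s Hs; destruct (IHU s Hs) as [HU EU].
    split; [constructor|]; auto.
  - intros M N _ IHM _ IHN s Hs.
    destruct (IHM s Hs) as [HM EM], (IHN s Hs) as [HN EN].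
    split; [constructor; auto|]; simpl; rewrite EM, EN; reflexivity.
  - intros U M HU IHU _ IHM s Hs.
    destruct (IHU s Hs) as [HsU EU], (IHM s Hs) as [HsM EM]; simpl bsubst.
    rewrite (flat_app_val _ _ HsU), (flat_app_val _ _ HU).
    split; [constructor; auto|]; simpl; rewrite EU, EM; reflexivity.
  - intros x s Hs; split; [apply Hs | reflexivity].
  - intros M _ IHM s Hs; destruct (IHM _ (val_subst_bup s Hs)) as [HM EM].
    split; [constructor; auto|]; simpl; rewrite EM.
    f_equal; apply lsubst_ext; intros [|n]; simpl; [reflexivity | apply flat_bren].
Qed.

Lemma bsubst1_bv (M U : bterm) (x : nat) : in_bv M -> in_bv_val U ->
  in_bv (bsubst (bsubst1 x U) M) /\
  flat (bsubst (bsubst1 x U) M) = lsubst (lsubst1 x (flat U)) (flat M).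
Proof.
  intros HM HU.
  destruct (proj1 bsubst_bv M HM _ (val_subst_bsubst1 x U HU)) as [HsM EsM].
  split; [exact HsM|]; rewrite EsM; apply lsubst_ext; intros n.
  unfold bsubst1, lsubst1; destruct (Nat.eqb n x); reflexivity.
Qed.

Lemma bbeta_bv (T S : bterm) : in_bv T -> in_bv_val S ->
  in_bv (bbeta T S) /\ flat (bbeta T S) = lbeta (flat T) (flat S).
Proof.
  intros HT HS.
  destruct (proj1 bsubst_bv T HT _ (val_subst_bscons S HS)) as [Hb Eb].
  unfold bbeta, lbeta; split; [exact Hb|]; rewrite Eb; apply lsubst_ext; intros [|n]; reflexivity.
Qed.

(* [bstep] as an inductive relation, so that it can be inverted. *)
Inductive bred : bterm -> bterm -> Prop :=
| bred_root T T' : broot T T' -> bred T T'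
| bred_lam T T' : bred T T' -> bred (BLam T) (BLam T')
| bred_appl T T' S : bred T T' -> bred (BApp T S) (BApp T' S)
| bred_appr S T T' : bred T T' -> bred (BApp S T) (BApp S T')
| bred_der T T' : bred T T' -> bred (BDer T) (BDer T')
| bred_bang T T' : bred T T' -> bred (BBang T) (BBang T').

Lemma bstep_bred (T T' : bterm) : bstep T T' -> bred T T'.
Proof.
  intros (C & R & R' & HR & -> & ->).
  induction C; simpl; [apply bred_root | apply bred_lam | apply bred_appl
    | apply bred_appr | apply bred_der | apply bred_bang]; assumption.
Qed.

Definition lstep_refl (M M' : lterm) : Prop := M = M' \/ lstep M M'.

Lemma lstep_refl_lam (M M' : lterm) : lstep_refl M M' -> lstep_refl (LLam M) (LLam M').
Proof.
  intros [-> | (C & R & R' & HR & -> & ->)]; [left; reflexivity | right].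
  exists (LCLam C), R, R'; auto.
Qed.

Lemma lstep_refl_appl (M M' N : lterm) :
  lstep_refl M M' -> lstep_refl (LApp M N) (LApp M' N).
Proof.
  intros [-> | (C & R & R' & HR & -> & ->)]; [left; reflexivity | right].
  exists (LCAppL C N), R, R'; auto.
Qed.

Lemma lstep_refl_appr (M N N' : lterm) :
  lstep_refl N N' -> lstep_refl (LApp M N) (LApp M N').
Proof.
  intros [-> | (C & R & R' & HR & -> & ->)]; [left; reflexivity | right].
  exists (LCAppR M C), R, R'; auto.
Qed.

Lemma lstep_beta_v (M V : lterm) : is_value V -> lstep (LApp (LLam M) V) (lbeta M V).
Proof. intros HV; exists LHole, (LApp (LLam M) V), (lbeta M V); repeat constructor; auto. Qed.

Lemma bred_bv :
  (forall M, in_bv M -> forall T, bred M T -> in_bv T /\ lstep_refl (flat M) (flat T)) /\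
  (forall U, in_bv_val U -> forall T, bred U T -> in_bv_val T /\ lstep_refl (flat U) (flat T)).
Proof.
  apply in_bv_mut_ind.
  - intros U HU IHU T Hred; inversion Hred as [? ? Hroot | | | | | ? U' HU']; subst.
    + inversion Hroot.
    + destruct (IHU U' HU'); split; [constructor|]; auto.
  - intros M N HM IHM HN IHN T Hred.
    inversion Hred as [? ? Hroot | | ? D' ? HD | ? ? N' HN' | |]; subst.
    + inversion Hroot.
    + (* the head der M either fires a derelict step or reduces inside M *)
      inversion HD as [? ? Hroot | | | | ? M' HM' |]; subst.
      * inversion Hroot; subst; inversion HM as [U HU | |]; subst.
        rewrite (flat_app_val _ _ HU); simpl.
        split; [constructor; auto | left; reflexivity].
      * destruct (IHM M' HM'); split; [constructor; auto|].
        apply lstep_refl_appl; auto.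
    + destruct (IHN N' HN'); split; [constructor; auto|].
      apply lstep_refl_appr; auto.
  - intros U M HU IHU HM IHM T Hred.
    inversion Hred as [? ? Hroot | | ? U' ? HU' | ? ? M' HM' | |]; subst.
    + inversion Hroot as [B S | ]; subst.
      inversion HU as [| ? HB]; subst; inversion HM as [? HS | |]; subst.
      destruct (bbeta_bv B S HB HS) as [Hb Eb].
      split; [exact Hb | right]; rewrite Eb; simpl.
      apply lstep_beta_v, flat_value, HS.
    + destruct (IHU U' HU') as [HU'' E]; rewrite !flat_app_val by assumption.
      split; [constructor; auto|]; apply lstep_refl_appl; auto.
    + destruct (IHM M' HM') as [HM'' E]; rewrite !flat_app_val by assumption.
      split; [constructor; auto|]; apply lstep_refl_appr; auto.
  - intros x T Hred; inversion Hred as [? ? Hroot | | | | |]; inversion Hroot.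
  - intros M HM IHM T Hred; inversion Hred as [? ? Hroot | ? M' HM' | | | |]; subst.
    + inversion Hroot.
    + destruct (IHM M' HM'); split; [constructor|]; auto.
      apply lstep_refl_lam; auto.
Qed.

Theorem mainTheorem9 :
  (forall M : lterm, flat (cbv M) = M) /\
  (forall (M U : bterm) (x : nat), in_bv M -> in_bv_val U ->
     in_bv (bsubst (bsubst1 x U) M) /\
     flat (bsubst (bsubst1 x U) M) = lsubst (lsubst1 x (flat U)) (flat M)) /\
  (forall (M T : bterm), in_bv M -> bstep M T ->
     in_bv T /\ (flat M = flat T \/ lstep (flat M) (flat T))).
Proof.
  split; [exact flat_cbv | split; [exact bsubst1_bv |]].
  intros M T HM Hstep.
  exact (proj1 bred_bv M HM T (bstep_bred M T Hstep)).
Qed.
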